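(* Let $\mathcal{T}$ be an essentially small triangulated category and let $(X,\sigma)$ be a classifying support data for $\mathcal{T}$. Then there is a homeomorphism $X\cong\operatorname{Spec}_\triangle(\mathcal{T})$.
   Context: A support data for $\mathcal{T}$ is a pair $(X,\sigma)$ of a topological space $X$ and an assignment $\sigma$ sending each object $M$ of $\mathcal{T}$ to a closed subset $\sigma(M)\subseteq X$ such that: $\sigma(0)=\emptyset$; $\sigma(M[n])=\sigma(M)$ for all $M$ and $n\in\mathbb{Z}$; $\sigma(M)\subseteq\sigma(L)\cup\sigma(N)$ for every exact triangle $L\to M\to N\to L[1]$; and $\sigma(M\oplus N)=\sigma(M)\cup\sigma(N)$. It is classifying if (i) $X$ is a noetherian sober space (sober: every irreducible closed subset has a unique generic point), and (ii) the maps $\mathcal{X}\mapsto\sigma(\mathcal{X}):=\bigcup_{M\in\mathcal{X}}\sigma(M)$ and $W\mapsto\sigma^{-1}(W):=\{M\in\mathcal{T}\mid\sigma(M)\subseteq W\}$ are mutually inverse lattice isomorphisms between the set of thick subcategories of $\mathcal{T}$ and the set of specialization-closed subsets of $X$ (unions of closed subsets). A thick subcategory $\mathcal{P}$ of $\mathcal{T}$ is called prime if among all thick subcategories $\mathcal{X}$ with $\mathcal{P}\subsetneq\mathcal{X}$ there is a unique minimal one. $\operatorname{Spec}_\triangle(\mathcal{T})$ is the set of prime thick subcategories, with closed subsets $\mathsf{Z}(\mathcal{E}):=\{\mathcal{P}\mid\mathcal{P}\cap\mathcal{E}=\emptyset\}$ for families $\mathcal{E}$ of objects of $\mathcal{T}$.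 *)

From HB Require Import structures.
From mathcomp Require Import all_boot all_order all_algebra.
From mathcomp Require Import all_classical topology.
Set Implicit Arguments. Unset Strict Implicit. Unset Printing Implicit Defensive.
Import GRing.Theory.
Local Open Scope ring_scope.
Local Open Scope classical_set_scope.

(* Objects form a type (so the category is (essentially) small),      *)
Record tcat_data := TCatData {
  Ob :> Type;
  Hom : Ob -> Ob -> zmodType;
  idm : forall A, Hom A A;
  comp : forall A B C, Hom B C -> Hom A B -> Hom A C;
  shift : Ob -> Ob;
  shiftm : forall A B, Hom A B -> Hom (shift A) (shift B);
  zero : Ob;
  dsum : Ob -> Ob -> Ob;
  dinl : forall A B, Hom A (dsum A B);
  dinr : forall A B, Hom B (dsum A B);
  dprl : forall A B, Hom (dsum A B) A;
  dprr : forall A B, Hom (dsum A B) B;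
  dist : forall A B C, Hom A B -> Hom B C -> Hom C (shift A) -> Prop
}.
Arguments idm {t} A.
Arguments comp {t A B C}.
Arguments shift {t}.
Arguments shiftm {t A B}.
Arguments zero {t}.
Arguments dsum {t}.
Arguments dinl {t A B}.
Arguments dinr {t A B}.
Arguments dprl {t A B}.
Arguments dprr {t A B}.
Arguments dist {t A B C}.

Section TriangulatedAxioms.
Variable T : tcat_data.

Definition is_iso (A B : T) (f : Hom A B) :=
  exists g : Hom B A, comp g f = idm A /\ comp f g = idm B.
Definition iso (A B : T) := exists f : Hom A B, is_iso f.

Definition additive_axioms :=
  [/\ (forall (A B C D : T) (f : Hom A B) (g : Hom B C) (h : Hom C D),
          comp h (comp g f) = comp (comp h g) f),
      (forall (A B : T) (f : Hom A B), comp (idm B) f = f /\ comp f (idm A) = f),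
      (forall (A B C : T) (f f' : Hom B C) (g : Hom A B),
          comp (f + f') g = comp f g + comp f' g) /\
      (forall (A B C : T) (f : Hom B C) (g g' : Hom A B),
          comp f (g + g') = comp f g + comp f g'),
      (forall A : T, (forall f g : Hom zero A, f = g) /\ (forall f g : Hom A zero, f = g))
    & (forall A B : T,
          [/\ comp (@dprl _ A B) dinl = idm A, comp (@dprr _ A B) dinr = idm B,
              comp (@dprl _ A B) dinr = 0, comp (@dprr _ A B) dinl = 0
            & comp dinl dprl + comp dinr dprr = idm (dsum A B)])].

Definition shift_axioms :=
  [/\ (forall A : T, shiftm (idm A) = idm (shift A)),
      (forall (A B C : T) (f : Hom A B) (g : Hom B C),
          shiftm (comp g f) = comp (shiftm g) (shiftm f)),
      (forall (A B : T) (f g : Hom A B), shiftm (f + g) = shiftm f + shiftm g),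
      (forall A B : T, bijective (@shiftm T A B))
    & (forall A : T, exists B : T, iso (shift B) A)].

Definition tri_morph (A B C A' B' C' : T)
  (f : Hom A B) (g : Hom B C) (h : Hom C (shift A))
  (f' : Hom A' B') (g' : Hom B' C') (h' : Hom C' (shift A'))
  (a : Hom A A') (b : Hom B B') (c : Hom C C') :=
  [/\ comp b f = comp f' a, comp c g = comp g' b & comp (shiftm a) h = comp h' c].

Definition TR1 :=
  [/\ (forall (A B C A' B' C' : T)
          (f : Hom A B) (g : Hom B C) (h : Hom C (shift A))
          (f' : Hom A' B') (g' : Hom B' C') (h' : Hom C' (shift A'))
          (a : Hom A A') (b : Hom B B') (c : Hom C C'),
          dist f g h -> tri_morph f g h f' g' h' a b c ->
          is_iso a -> is_iso b -> is_iso c -> dist f' g' h'),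
      (forall A : T, dist (idm A) (0 : Hom A zero) (0 : Hom zero (shift A)))
    & (forall (A B : T) (f : Hom A B),
          exists (C : T) (g : Hom B C) (h : Hom C (shift A)), dist f g h)].

Definition TR2 :=
  forall (A B C : T) (f : Hom A B) (g : Hom B C) (h : Hom C (shift A)),
    dist f g h <-> dist g h (- shiftm f).

Definition TR3 :=
  forall (A B C A' B' C' : T)
    (f : Hom A B) (g : Hom B C) (h : Hom C (shift A))
    (f' : Hom A' B') (g' : Hom B' C') (h' : Hom C' (shift A'))
    (a : Hom A A') (b : Hom B B'),
    dist f g h -> dist f' g' h' -> comp b f = comp f' a ->
    exists c : Hom C C', tri_morph f g h f' g' h' a b c.

Definition TR4 :=
  forall (A B C Q1 Q2 Q3 : T) (f : Hom A B) (g : Hom B C)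
    (p1 : Hom B Q1) (d1 : Hom Q1 (shift A))
    (p2 : Hom C Q2) (d2 : Hom Q2 (shift A))
    (p3 : Hom C Q3) (d3 : Hom Q3 (shift B)),
    dist f p1 d1 -> dist (comp g f) p2 d2 -> dist g p3 d3 ->
    exists (a : Hom Q1 Q2) (b : Hom Q2 Q3),
      [/\ dist a b (comp (shiftm p1) d3),
          comp a p1 = comp p2 g, comp d2 a = d1,
          comp b p2 = p3 & comp d3 b = comp (shiftm f) d2].

Definition triangulated :=
  [/\ additive_axioms, shift_axioms, TR1, TR2 & (TR3 /\ TR4)].

(* Thick subcategories (full, replete, triangulated, closed under      *)
(* direct summands), given by their classes of objects.                *)
Definition thick (P : set T) :=
  [/\ P zero,
      (forall A B : T, iso A B -> P A -> P B),
      (forall A : T, P A <-> P (shift A)),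
      (forall (A B C : T) (f : Hom A B) (g : Hom B C) (h : Hom C (shift A)),
          dist f g h ->
          [/\ P A -> P B -> P C, P B -> P C -> P A & P A -> P C -> P B])
    & (forall A B : T, P (dsum A B) -> P A /\ P B)].

Definition minimal_over (P Q : set T) :=
  [/\ thick Q, P `<=` Q, P <> Q &
      (forall Y : set T, thick Y -> P `<=` Y -> P <> Y -> Y `<=` Q -> Y = Q)].

Definition prime (P : set T) :=
  thick P /\
  exists Q : set T, minimal_over P Q /\ forall Q', minimal_over P Q' -> Q' = Q.

Definition Spec := {P : set T | prime P}.

(* the closed subsets Z(E) of Spec *)
Definition Zcl (E : set T) : set Spec :=
  [set P : Spec | proj1_sig P `&` E = set0].

End TriangulatedAxioms.

Section Topo.
Variable X : topologicalType.

Definition irreducible_closed (Z : set X) :=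
  [/\ closed Z, Z <> set0 &
      forall Z1 Z2 : set X, closed Z1 -> closed Z2 -> Z = Z1 `|` Z2 ->
        Z = Z1 \/ Z = Z2].

Definition noetherian_space :=
  forall F : nat -> set X, (forall n, closed (F n)) ->
    (forall n, F n.+1 `<=` F n) -> exists N, forall n, (N <= n)%N -> F n = F N.

Definition sober :=
  forall Z : set X, irreducible_closed Z ->
    exists x, closure [set x] = Z /\ forall y, closure [set y] = Z -> y = x.

(* union of closed subsets *)
Definition specialization_closed (W : set X) :=
  forall x, W x -> exists Z : set X, [/\ closed Z, Z x & Z `<=` W].
End Topo.

Section Support.
Variables (T : tcat_data) (X : topologicalType) (sigma : T -> set X).

Definition support_data :=
  [/\ (forall M : T, closed (sigma M)),
      sigma zero = set0,
      (* sigma(M[n]) = sigma(M) for all n : Z; M[1] = shift M and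
         M[-1] is any object N with shift N isomorphic to M *)
      (forall M : T, sigma (shift M) = sigma M) /\
      (forall M N : T, iso (shift N) M -> sigma N = sigma M),
      (forall (A B C : T) (f : Hom A B) (g : Hom B C) (h : Hom C (shift A)),
          dist f g h -> sigma B `<=` sigma A `|` sigma C)
    & (forall M N : T, sigma (dsum M N) = sigma M `|` sigma N)].

Definition sigma_of (P : set T) : set X := \bigcup_(M in P) sigma M.
Definition sigma_inv (W : set X) : set T := [set M | sigma M `<=` W].

(* the (inclusion-preserving, hence lattice) maps sigma_of and sigma_inv
   are mutually inverse bijections between thick subcategories and
   specialization-closed subsets *)
Definition classifying :=
  [/\ support_data, noetherian_space X, sober X,
      (forall P : set T, thick P ->
         specialization_closed (sigma_of P) /\ sigma_inv (sigma_of P) = P)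
    & (forall W : set X, specialization_closed W ->
         thick (sigma_inv W) /\ sigma_of (sigma_inv W) = W)].
End Support.

From Pilot Require Import Defs.
From HB Require Import structures.
From mathcomp Require Import all_boot all_order all_algebra.
From mathcomp Require Import all_classical topology.

(* sigma_of and sigma_inv are inverse order isomorphisms between thick
   subcategories and specialization-closed subsets of X, so a thick
   subcategory is prime exactly when the corresponding specialization-closed
   set W has a unique minimal specialization-closed strict superset.  In a
   noetherian sober space these minimal supersets are the sets W ∪ {m} with m
   a closed point of X \ W, so the condition holds exactly when
   W = W_x := {y | x ∉ cl{y}} for some (unique) x; this gives the bijection
   x ↦ sigma_inv W_x.  It pulls Z(E) back to ⋂_{M ∈ E} sigma(M), and these are
   all the closed sets because every closed C is a single support sigma(M):
   by noetherian induction, since the closed subsets of C lying in a support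
   inside C are stable under finite unions and include every irreducible
   closed subset, through its generic point. *)

Local Open Scope classical_set_scope.

Lemma bij_image_eq_preimage {aT rT : Type} {f : aT -> rT} {A : set aT} {B : set rT} :
  bijective f -> f @` A = B <-> A = f @^-1` B.
Proof.
case=> g fK gK; split=> [<- | ->].
  apply/seteqP; split=> [x Ax | x [y Ay /(can_inj fK) <- //]]; by exists x.
apply/seteqP; split=> [_ [x Bfx <-] // | y By].
by exists (g y); rewrite /preimage /= gK.
Qed.

Lemma strict_superset_witness {A : Type} {P Q : set A} :
  P `<=` Q -> P <> Q -> exists2 y, Q y & ~ P y.
Proof.
move=> PQ nPQ; have /nonsubset[y [Qy nPy]] : ~ Q `<=` P.
  by move=> QP; apply/nPQ/seteqP.
by exists y.
Qed.

Section MinimalOver.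
Context {A : Type} (good : set A -> Prop).

Definition minimal_over_in (P Q : set A) :=
  [/\ good Q, P `<=` Q, P <> Q &
      forall Y, good Y -> P `<=` Y -> P <> Y -> Y `<=` Q -> Y = Q].

Definition unique_minimal_over_in (P : set A) :=
  exists Q, minimal_over_in P Q /\ forall Q', minimal_over_in P Q' -> Q' = Q.

End MinimalOver.

Lemma primeE (T : tcat_data) (P : set T) :
  Defs.prime P <-> thick P /\ unique_minimal_over_in (@thick T) P.
Proof. by []. Qed.

Definition set_order_iso {A B : Type} (goodA : set A -> Prop) (goodB : set B -> Prop)
    (f : set A -> set B) (g : set B -> set A) :=
  [/\ forall P Q, P `<=` Q -> f P `<=` f Q,
      forall W V, W `<=` V -> g W `<=` g V,
      forall P, goodA P -> goodB (f P) /\ g (f P) = P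
    & forall W, goodB W -> goodA (g W) /\ f (g W) = W].

Lemma minimal_over_in_iso {A B : Type} {goodA : set A -> Prop} {goodB : set B -> Prop}
    {f : set A -> set B} {g : set B -> set A} (fg_iso : set_order_iso goodA goodB f g)
    {P Q : set A} : goodA P ->
  minimal_over_in goodA P Q -> minimal_over_in goodB (f P) (f Q).
Proof.
have [fS gS fK gK] := fg_iso.
move=> gP [gQ PQ nPQ Qmin]; have [gfQ gfQE] := fK Q gQ; have gfPE := (fK P gP).2.
split=> // [|fPQ|Y gY fPY nfPY YfQ]; first exact: fS.
  by apply: nPQ; rewrite -gfPE fPQ gfQE.
have [ggY fgY] := gK Y gY.
rewrite -fgY (Qmin (g Y)) //.
- by rewrite -gfPE; exact: gS.
- by move=> PgY; apply: nfPY; rewrite PgY fgY.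
- by rewrite -gfQE; exact: gS.
Qed.

Lemma set_order_iso_sym {A B : Type} {goodA : set A -> Prop} {goodB : set B -> Prop}
    {f : set A -> set B} {g : set B -> set A} :
  set_order_iso goodA goodB f g -> set_order_iso goodB goodA g f.
Proof. by case. Qed.

Lemma unique_minimal_over_in_iso {A B : Type} {goodA : set A -> Prop}
    {goodB : set B -> Prop} {f : set A -> set B} {g : set B -> set A} {P : set A} :
  set_order_iso goodA goodB f g -> goodA P ->
  unique_minimal_over_in goodA P -> unique_minimal_over_in goodB (f P).
Proof.
move=> fg_iso gP [Q [Qmin Quniq]]; exists (f Q); split.
  exact: (minimal_over_in_iso fg_iso gP Qmin).
have [_ _ fK gK] := fg_iso; have [gfP gfPE] := fK P gP.
move=> V Vmin; have [gV _ _ _] := Vmin.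
rewrite -(gK V gV).2 (Quniq (g V)) //.
by rewrite -gfPE; exact: (minimal_over_in_iso (set_order_iso_sym fg_iso)).
Qed.

Section PointClosures.
Context {X : topologicalType}.
Implicit Types (x y z m : X) (C U W V : set X).

Lemma closure_set1_id x : closure [set x] x.
Proof. exact: subset_closure. Qed.

Lemma closure_set1_sub {C y} : closed C -> C y -> closure [set y] `<=` C.
Proof. by move=> Ccl Cy; apply: subset_trans Ccl; apply: closureS => _ ->. Qed.

Lemma closure_set1_trans {y z} :
  closure [set y] z -> closure [set z] `<=` closure [set y].
Proof. by apply: closure_set1_sub; exact: closed_closure. Qed.

Lemma irreducible_closure_set1 x : irreducible_closed (closure [set x]).
Proof.
split; [exact: closed_closure | by move=> x0; have := closure_set1_id x; rewrite x0 |].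
move=> Z1 Z2 Z1cl Z2cl xZ.
have [Z1x | Z2x] : (Z1 `|` Z2) x by rewrite -xZ; exact: closure_set1_id.
  by left; apply/seteqP; split; [exact: closure_set1_sub | rewrite xZ; exact: subsetUl].
by right; apply/seteqP; split; [exact: closure_set1_sub | rewrite xZ; exact: subsetUr].
Qed.

Definition generalizations x : set X := [set y | closure [set y] x].

Definition closed_point_in U m := U m /\ forall z, U z -> closure [set m] z -> z = m.

Lemma specialization_closedP W :
  specialization_closed W <-> forall y, W y -> closure [set y] `<=` W.
Proof.
split=> [Wsc y /Wsc [Z [Zcl Zy ZW]] | Wcl y Wy].
  exact: subset_trans (closure_set1_sub Zcl Zy) ZW.
exists (closure [set y]); split; [exact: closed_closure | exact: closure_set1_id |].
exact: Wcl.
Qed.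

Lemma closed_specialization_closed {C} : closed C -> specialization_closed C.
Proof. by move=> Ccl y Cy; exists C; split. Qed.

Lemma specialization_closed_compl_gen x :
  specialization_closed (~` generalizations x).
Proof.
apply/specialization_closedP => y ngy z yz gz.
by apply: ngy; exact: closure_set1_trans yz _ gz.
Qed.

Lemma closed_sub_compl_gen {C x} : closed C -> C `<=` ~` generalizations x <-> ~ C x.
Proof.
move=> Ccl; split=> [Cgen Cx | nCx y Cy gy]; first exact: Cgen x Cx (closure_set1_id x).
exact/nCx/(closure_set1_sub Ccl Cy).
Qed.

Lemma specialization_closed_setU1 W m : specialization_closed W ->
  closed_point_in (~` W) m -> specialization_closed (W `|` [set m]).
Proof.
move=> /specialization_closedP Wsc [_ mmin]; apply/specialization_closedP => y [Wy | ->].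
  exact: subset_trans (Wsc y Wy) (@subsetUl _ _ _).
by move=> z mz; have [Wz | nWz] := pselect (W z); [left | right; exact: mmin].
Qed.

Lemma minimal_over_setU1 {W m} : specialization_closed W -> closed_point_in (~` W) m ->
  minimal_over_in (@specialization_closed X) W (W `|` [set m]).
Proof.
move=> Wsc [nWm mmin]; split; [exact: specialization_closed_setU1 | exact: subsetUl | |].
  by move=> WU; apply: nWm; rewrite WU; right.
move=> Y _ WY nWY YU; apply/seteqP; split=> // z [Wz | ->]; first exact: WY.
have [y Yy nWy] := strict_superset_witness WY nWY.
by case: (YU y Yy) => [/nWy [] | <-].
Qed.

Section Sober.
Hypothesis sober_X : sober X.

Lemma closure_set1_inj x y : closure [set x] = closure [set y] -> x = y.
Proof.
move=> xy; have [g [_ uniq_gen]] := sober_X _ (irreducible_closure_set1 x).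
by rewrite (uniq_gen x erefl) (uniq_gen y (esym xy)).
Qed.

Lemma generalizations_inj : injective generalizations.
Proof.
move=> x y gxy; apply: closure_set1_inj; apply/seteqP; split; apply: closure_set1_trans.
  by have : generalizations y y := closure_set1_id y; rewrite -gxy.
by have : generalizations x x := closure_set1_id x; rewrite gxy.
Qed.

Lemma closed_point_in_gen x m : closed_point_in (generalizations x) m <-> m = x.
Proof.
split=> [[mx mmin] | ->]; first by symmetry; exact: mmin (closure_set1_id x) mx.
split=> [|z zx xz]; first exact: closure_set1_id.
by apply: closure_set1_inj; apply/seteqP; split; exact: closure_set1_trans.
Qed.

Section Noetherian.
Hypothesis noetherian_X : noetherian_space X.

Lemma noetherian_minimal {Q : set X -> Prop} {C} : (forall B, Q B -> closed B) -> Q C ->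
  exists B, Q B /\ forall B', Q B' -> B' `<=` B -> B' = B.
Proof.
move=> Qcl QC; apply: contrapT => nomin.
have shrink (B : {B | Q B}) : {B' : {B | Q B} | sval B' `<=` sval B /\ sval B' <> sval B}.
  apply: cid; apply: contrapT => nB; apply: nomin; exists (sval B); split=> [|B' QB' B'B].
    exact: svalP.
  by apply: contrapT => nB'B; apply: nB; exists (exist _ B' QB').
pose F n := sval (iter n (fun B => sval (shrink B)) (exist _ C QC)).
have [N FN] := noetherian_X F (fun n => Qcl _ (svalP _)) (fun n => (svalP (shrink _)).1).
exact: (svalP (shrink _)).2 (FN N.+1 (leqnSn N)).
Qed.

Lemma noetherian_closed_ind (P : set X -> Prop) :
  P set0 ->
  (forall Z1 Z2, closed Z1 -> closed Z2 -> P Z1 -> P Z2 -> P (Z1 `|` Z2)) ->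
  (forall Z, irreducible_closed Z -> P Z) ->
  forall C, closed C -> P C.
Proof.
move=> P0 PU Pirr C Ccl; apply: contrapT => nPC.
have [B [[Bcl nPB] Bmin]] :=
  noetherian_minimal (Q := fun B => closed B /\ ~ P B) (fun _ QB => QB.1) (conj Ccl nPC).
have P_proper Z : closed Z -> Z `<=` B -> Z <> B -> P Z.
  by move=> Zcl ZB nZB; apply: contrapT => nPZ; exact/nZB/Bmin.
apply/nPB/Pirr; split=> // [B0 | Z1 Z2 Z1cl Z2cl BU]; first by apply: nPB; rewrite B0.
apply: contrapT => /not_orP [nB1 nB2]; apply: nPB; rewrite BU.
apply: PU => //; apply: P_proper => //.
- by rewrite BU; exact: subsetUl.
- by move/esym.
- by rewrite BU; exact: subsetUr.
- by move/esym.
Qed.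

Lemma exists_closed_point_in {U y} : U y ->
  exists2 m, closed_point_in U m & closure [set y] m.
Proof.
move=> Uy.
pose Q B := exists m, [/\ U m, closure [set y] m & B = closure [set m]].
have Qcl B : Q B -> closed B by move=> [m [_ _ ->]]; exact: closed_closure.
have Qy : Q (closure [set y]) by exists y; split=> //; exact: closure_set1_id.
have [_ [[m [Um ym ->]] mmin]] := noetherian_minimal Qcl Qy.
exists m => //; split=> // z Uz mz.
apply: closure_set1_inj; apply: mmin; last exact: closure_set1_trans.
by exists z; split=> //; exact: closure_set1_trans ym _ mz.
Qed.

Lemma minimal_over_spec_closed {W V} : specialization_closed W ->
  minimal_over_in (@specialization_closed X) W V ->
  exists2 m, closed_point_in (~` W) m & V = W `|` [set m].
Proof.
move=> Wsc [Vsc WV nWV Vmin].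
have [y Vy nWy] := strict_superset_witness WV nWV.
have [m mpt ym] := exists_closed_point_in (U := ~` W) nWy.
have [Wmsc WWm nWWm _] := minimal_over_setU1 Wsc mpt.
exists m => //; symmetry; apply: Vmin => // z [/WV // | ->].
exact: (specialization_closedP V).1 Vsc y Vy m ym.
Qed.

Lemma unique_minimal_over_compl_gen x :
  unique_minimal_over_in (@specialization_closed X) (~` generalizations x).
Proof.
have gen_sc := specialization_closed_compl_gen x.
have xpt : closed_point_in (~` ~` generalizations x) x by rewrite setCK; exact/closed_point_in_gen.
exists (~` generalizations x `|` [set x]); split; first exact: minimal_over_setU1.
by move=> V /(minimal_over_spec_closed gen_sc) [m]; rewrite setCK => /closed_point_in_gen ->.
Qed.

Lemma unique_minimal_over_spec_closed {W} : specialization_closed W ->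
  unique_minimal_over_in (@specialization_closed X) W -> exists x, W = ~` generalizations x.
Proof.
move=> Wsc [V [Vmin Vuniq]].
have [x xpt Vx] := minimal_over_spec_closed Wsc Vmin.
have closed_pt_eq m : closed_point_in (~` W) m -> m = x.
  move=> mpt; have : (W `|` [set m]) m by right.
  by rewrite (Vuniq _ (minimal_over_setU1 Wsc mpt)) Vx => -[/(mpt.1) []|].
exists x; apply/seteqP; split=> [z Wz xz | z ngz].
  exact/(xpt.1)/((specialization_closedP W).1 Wsc z Wz x xz).
apply: contrapT => nWz; apply: ngz.
have [m mpt zm] := exists_closed_point_in (U := ~` W) nWz.
by rewrite -(closed_pt_eq m mpt).
Qed.

End Noetherian.
End Sober.
End PointClosures.

Section ClassifyingSupport.
Context {T : tcat_data} {X : topologicalType} {sigma : T -> set X}.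
Hypothesis sigma_classifying : classifying sigma.

Let sober_X : sober X. Proof. by case: sigma_classifying. Qed.
Let noetherian_X : noetherian_space X. Proof. by case: sigma_classifying. Qed.
Let sigma_closed M : closed (sigma M). Proof. by case: sigma_classifying => -[]. Qed.

Lemma classifying_order_iso : set_order_iso (@thick T) (@specialization_closed X)
  (sigma_of sigma) (sigma_inv sigma).
Proof.
have [_ _ _ thickK scK] := sigma_classifying.
split=> // [P Q PQ x [M PM Mx] | W V WV M MW]; first by exists M; [exact: PQ|].
exact: subset_trans WV.
Qed.

Lemma closed_eq_sigma C : closed C -> exists M, sigma M = C.
Proof.
have [[_ sigma0 _ _ sigmaU] _ _ _ scK] := sigma_classifying.
move=> Ccl.
suff /(_ C Ccl (@subset_refl _ C)) [M [MC CM]] :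
    forall Z, closed Z -> Z `<=` C -> exists M, sigma M `<=` C /\ Z `<=` sigma M.
  by exists M; apply/seteqP.
apply: (noetherian_closed_ind noetherian_X).
- by move=> _; exists Defs.zero; rewrite sigma0; split; exact: sub0set.
- move=> Z1 Z2 _ _ P1 P2; rewrite subUset => -[/P1 [M1 [M1C ZM1]] /P2 [M2 [M2C ZM2]]].
  by exists (dsum M1 M2); rewrite sigmaU subUset; split=> //; exact: setUSS.
move=> Z Zirr ZC; have [z [zZ _]] := sober_X _ Zirr.
have Zz : Z z by rewrite -zZ; exact: closure_set1_id.
have [M MC Mz] : sigma_of sigma (sigma_inv sigma C) z.
  by rewrite (scK C (closed_specialization_closed Ccl)).2; exact: ZC.
by exists M; split=> //; rewrite -zZ; exact: closure_set1_sub Mz.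
Qed.

Lemma closed_bigcap_sigma C : closed C <-> exists E : set T, C = \bigcap_(M in E) sigma M.
Proof.
split=> [/closed_eq_sigma [M <-] | [E ->]]; first by exists [set M]; rewrite bigcap_set1.
by apply: closed_bigI => M _; exact: sigma_closed.
Qed.

Definition prime_of_point (x : X) : set T := sigma_inv sigma (~` generalizations x).

Lemma prime_of_point_prime x : Defs.prime (prime_of_point x).
Proof.
have sK := set_order_iso_sym classifying_order_iso.
have [_ _ scK _] := sK; have gen_sc := specialization_closed_compl_gen x.
split; first exact: (scK _ gen_sc).1.
exact: unique_minimal_over_in_iso sK gen_sc
  (unique_minimal_over_compl_gen sober_X noetherian_X x).
Qed.

Definition point_prime (x : X) : Spec T := exist _ _ (prime_of_point_prime x).

Lemma point_prime_inj : injective point_prime.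
Proof.
have [_ _ _ scK] := classifying_order_iso.
move=> x y /(congr1 (@sval _ _)) /= /(congr1 (sigma_of sigma)).
rewrite (scK _ (specialization_closed_compl_gen x)).2.
rewrite (scK _ (specialization_closed_compl_gen y)).2.
by move/(congr1 setC); rewrite !setCK; exact: generalizations_inj.
Qed.

Lemma point_prime_surj (P : Spec T) : exists x, point_prime x = P.
Proof.
case: P => P Pprime; have /primeE [Pthick Pumin] := Pprime.
have [_ _ thickK _] := classifying_order_iso; have [Psc PK] := thickK P Pthick.
have [x gen_x] := unique_minimal_over_spec_closed sober_X noetherian_X Psc
  (unique_minimal_over_in_iso classifying_order_iso Pthick Pumin).
exists x; apply: eq_sig_hprop => [? ? ? | /=]; first exact: Prop_irrelevance.
by rewrite /prime_of_point -gen_x PK.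
Qed.

Lemma point_prime_bij : bijective point_prime.
Proof.
rewrite -setTT_bijective; split=> // [x y _ _ | P _]; first exact: point_prime_inj.
by have [x <-] := point_prime_surj P; exists x.
Qed.

Lemma preimage_Zcl (E : set T) : point_prime @^-1` Zcl E = \bigcap_(M in E) sigma M.
Proof.
apply/seteqP; split=> [x /= PE M EM | x sx].
  apply: contrapT => nMx; suff : (prime_of_point x `&` E) M by rewrite PE.
  by split=> //; exact/closed_sub_compl_gen.
apply/seteqP; split=> // M [PM EM].
exact: (closed_sub_compl_gen (sigma_closed M)).1 PM (sx M EM).
Qed.

End ClassifyingSupport.

Theorem theorem2p16 (T : tcat_data) (HT : triangulated T)
  (X : topologicalType) (sigma : T -> set X)
  (Hsigma : classifying sigma) :
  exists phi : X -> Spec T,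
    bijective phi /\
    forall A : set X, closed A <-> exists E : set T, phi @` A = Zcl E.
Proof.
have phi_bij := point_prime_bij Hsigma.
exists (point_prime Hsigma); split=> // A.
split=> [/(closed_bigcap_sigma Hsigma) [E AE] | [E AE]].
  by exists E; apply/(bij_image_eq_preimage phi_bij); rewrite preimage_Zcl.
apply/(closed_bigcap_sigma Hsigma); exists E.
by rewrite -preimage_Zcl; apply/(bij_image_eq_preimage phi_bij).
Qed.
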